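(* Let $r(t)\in\mathbb{Z}[t]$ with $r(0)\neq0$, and let $X$ be the set of roots of $r(t)$ in $\overline{\mathbb{Q}}^\times$. The following are equivalent: (i) $X$ is not an arithmetically-free subset of $(\overline{\mathbb{Q}}^\times,\cdot)$; (ii) there exist $u\in\mathbb{N}$ and $s(t)\in\mathbb{Z}[t]\setminus\mathbb{Z}$ such that both the cyclotomic polynomial $\Phi_u(t)$ and $s(t^u)$ divide $r(t)$ in $\mathbb{Z}[t]$.
   Context: $\mathbb{N}=\{1,2,\dots\}$. A finite subset $X$ of an abelian group $(A,\cdot)$ is arithmetically-free if $X$ contains no progression $\lambda,\lambda\mu,\lambda\mu^2,\dots,\lambda\mu^{|X|}$ with $\lambda,\mu\in X$. $\Phi_u(t)$ denotes the $u$-th cyclotomic polynomial. *)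

From mathcomp Require Import all_boot all_order all_algebra all_field.
From mathcomp Require Import finmap.
Set Implicit Arguments. Unset Strict Implicit. Unset Printing Implicit Defensive.
Import Order.TTheory GRing.Theory Num.Theory.
Local Open Scope ring_scope.
Local Open Scope fset_scope.

(* Qbar is modelled by algC (the algebraic closure of Q). *)

Definition arith_free (X : {fset algC}) : Prop :=
  ~ exists lam mu : algC,
      [/\ lam \in X, mu \in X &
          forall k : nat, (k <= #|` X|)%N -> lam * mu ^+ k \in X].

(* Divisibility in Z[t] (genuine, not up to rational scalars). *)
Definition dvdZpoly (p q : {poly int}) : Prop := exists c : {poly int}, q = c * p.

From HB Require Import structures.
From mathcomp Require Import all_boot all_order all_algebra all_field.
From mathcomp Require Import finmap.
From Stdlib Require Import Classical_Prop.
Set Implicit Arguments. Unset Strict Implicit. Unset Printing Implicit Defensive.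
Import Order.TTheory GRing.Theory Num.Theory.
Local Open Scope ring_scope.

(* A progression lam, lam mu, ..., lam mu^|X| inside X repeats a term, so mu is
   a primitive u-th root of unity and every lam mu^k is a root of r.  Phi_u is
   the minimal polynomial of mu, hence divides r.  If q is the minimal
   polynomial of lam^u, every root of q(t^u) is a Galois conjugate of some
   lam mu^k, hence a root of r; as q(t^u) is separable it divides r over Q,
   and Gauss's lemma turns it into s(t^u) dividing r in Z[t].  Conversely, if
   s(a) = 0, lam^u = a and zeta is a primitive u-th root of unity, then zeta
   and all lam zeta^k are roots of r (of Phi_u and s(t^u) respectively), and
   none is 0 since r(0) != 0. *)

Lemma progression_primitive_root (R : idomainType) (X : {fset R}) (lam mu : R) :
    lam != 0 -> mu != 0 -> (forall k, (k <= #|` X|)%N -> lam * mu ^+ k \in X) ->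
  exists2 u, u.-primitive_root mu & (u <= #|` X|)%N.
Proof.
move=> lam_neq0 mu_neq0 prog; set n := #|` X| in prog *.
pose terms := [seq lam * mu ^+ k | k <- iota 0 n.+1].
have /(uniqPn 0)[i [j [lt_ij]]] : ~~ uniq terms.
  apply/negP => /uniq_leq_size le_terms.
  suff : (size terms <= n)%N by rewrite size_map size_iota ltnn.
  by apply: le_terms => x /mapP[k]; rewrite mem_iota => /andP[_ lt_kn] ->; apply: prog.
rewrite size_map size_iota => lt_jn.
have lt_in := ltn_trans lt_ij lt_jn.
rewrite /terms !(nth_map 0) ?size_iota // (nth_iota _ _ lt_in) (nth_iota _ _ lt_jn).
rewrite !add0n => /(mulfI lam_neq0) Emu.
have mu_period : mu ^+ (j - i) = 1.
  by apply: (mulfI (expf_neq0 i mu_neq0)); rewrite mulr1 -exprD subnKC // ltnW.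
have ji_gt0 : (0 < j - i)%N by rewrite subn_gt0.
have [u mu_prim u_dvd] := prim_order_exists ji_gt0 mu_period.
exists u => //; apply: leq_trans (dvdn_leq ji_gt0 u_dvd) _.
by rewrite leq_subLR -ltnS (leq_trans lt_jn) // ltnS leq_addl.
Qed.

Lemma separable_poly_simple_roots (F : closedFieldType) (p : {poly F}) :
  (forall z, root p z -> ~~ root p^`() z) -> separable_poly p.
Proof.
move=> simple_p; rewrite unlock /coprimep; apply: contraT => /closed_rootP[z gz].
have pz : root p z := root_dvdp (dvdp_gcdl _ _) gz.
by have := simple_p z pz; rewrite (root_dvdp (dvdp_gcdr _ _) gz).
Qed.

Lemma separable_dvdp_roots (F : closedFieldType) (p q : {poly F}) :
  separable_poly p -> (forall z, root p z -> root q z) -> p %| q.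
Proof.
move=> sep_p pq; have [zs Dp] := closed_field_poly_normal p.
have lc_p : lead_coef p != 0 by rewrite lead_coef_eq0 separable_poly_neq0.
rewrite Dp dvdpZl //; apply: uniq_roots_dvdp.
  by apply/allP => z zs_z; apply: pq; rewrite Dp rootZ // root_prod_XsubC.
by rewrite uniq_rootsE -separable_prod_XsubC -(eqp_separable (eqp_scale _ lc_p)) -Dp.
Qed.

Lemma deriv_neq0 (R : numDomainType) (p : {poly R}) : (1 < size p)%N -> p^`() != 0.
Proof.
move=> p_gt1; have p_neq0 : p != 0 by rewrite -size_poly_gt0 ltnW.
have Dn : (size p).-1 = (size p).-2.+1 by case: (size p) p_gt1 => [|[]].
apply/eqP => /(congr1 (fun q : {poly R} => q`_(size p).-2)) /eqP.
by rewrite coef_deriv coef0 -Dn -lead_coefE mulrn_eq0 Dn lead_coef_eq0 (negPf p_neq0).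
Qed.

Lemma dvdZpoly_monic (m r : {poly int}) : m \is monic ->
  map_poly (intr : int -> rat) m %| map_poly intr r -> dvdZpoly m r.
Proof.
rewrite dvdp_rat_int => mon_m /(Pdiv.IdomainMonic.dvdpP mon_m)[c ->].
by exists c.
Qed.

Lemma comp_poly_Xn_sparse (R : nzRingType) (p : {poly R}) n : (0 < n)%N ->
    (forall i, ~~ (n %| i)%N -> p`_i = 0) ->
  p = (\poly_(i < size p) p`_(i * n)) \Po 'X^n.
Proof.
move=> n_gt0 sparse_p; apply/polyP => i; rewrite coef_comp_poly_Xn //.
case: (boolP (n %| i)%N) => [/dvdnP[k ->] | /sparse_p //].
rewrite coef_poly mulnK //; case: ltnP => // lt_p_k.
by rewrite nth_default // (leq_trans lt_p_k) // leq_pmulr.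
Qed.

Lemma root_comp_Xn_mul_unity (R : comNzRingType) (s : {poly R}) n x z :
  root (s \Po 'X^n) x -> z ^+ n = 1 -> root (s \Po 'X^n) (x * z).
Proof. by rewrite !rootE !horner_comp !hornerXn exprMn => + ->; rewrite mulr1. Qed.

Lemma dvdZpoly_comp_Xn (q : {poly rat}) (u : nat) (r : {poly int}) :
    (0 < u)%N -> (1 < size q)%N -> q \Po 'X^u %| map_poly intr r ->
  exists2 s : {poly int}, (1 < size s)%N & dvdZpoly (s \Po 'X^u) r.
Proof.
move=> u_gt0 size_q /dvdpP_rat_int[p [c c_neq0 Dp] [r' Dr]].
have sparse_p i : ~~ (u %| i)%N -> p`_i = 0.
  move=> u_i; have /esym/eqP := congr1 (fun f : {poly rat} => f`_i) Dp.
  rewrite /= coefZ coef_map coef_comp_poly_Xn // (negPf u_i) mulf_eq0.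
  by rewrite (negPf c_neq0) intr_eq0 => /eqP.
set s := \poly_(i < size p) p`_(i * u); have Ds := comp_poly_Xn_sparse u_gt0 sparse_p.
exists s; last by exists r'; rewrite Dr -Ds mulrC.
have size_p : size p = size (q \Po 'X^u).
  by rewrite Dp size_scale // size_map_inj_poly //; exact: intr_inj.
have := size_comp_poly s ('X^u : {poly int}).
rewrite -Ds size_p size_comp_poly !size_polyXn /= => /eqP.
rewrite eqn_mul2r gtn_eqF //= => /eqP.
by case: (size s) => [|[|n]] //=; case: (size q) size_q => [|[|m]].
Qed.

Lemma map_poly_rmorph_intr (R S : nzRingType) (f : {rmorphism R -> S})
    (p : {poly int}) :
  map_poly f (map_poly intr p) = map_poly intr p.
Proof. by rewrite -map_poly_comp; apply: eq_map_poly => x /=; rewrite rmorph_int. Qed.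

(* Extend the Q-embedding a |-> b of Q(a) to the number field generated by all
   roots of minCpoly a, then to an automorphism of algC. *)
Lemma minCpoly_root_aut (a b : algC) : root (minCpoly a) b ->
  exists nu : {rmorphism algC -> algC}, nu a = b.
Proof.
move=> rb.
have [q [Dq _] dv_q] := minCpolyP a.
have [rs Drs] := closed_field_poly_normal (minCpoly a).
rewrite (monicP (minCpoly_monic a)) scale1r in Drs.
have [Qs [QsC [[|aa ss] //= [Daa Dss] genQs]]] := num_field_exists (a :: rs).
have QsC_rat (p : {poly rat}) :
    map_poly QsC (map_poly (in_alg Qs) p) = map_poly ratr p.
  rewrite -map_poly_comp; apply: eq_map_poly => c.
  by rewrite /= rmorphZ_num rmorph1 mulr1.
have : b \in rs by rewrite -root_prod_XsubC -Drs.
rewrite -Dss => /mapP[bb _ Dbb].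
have rbb : root (map_poly \1%VF (minPoly 1 aa)) bb.
  rewrite lfun1_poly -(fmorph_root QsC) -Dbb.
  have /polyOver1P[q1 Dq1] := minPolyOver 1 aa.
  have : root (map_poly QsC (minPoly 1 aa)) a.
    by rewrite -Daa fmorph_root root_minPoly.
  rewrite Dq1 QsC_rat dv_q => /dvdpP[q2 ->].
  by rewrite rmorphM rootM; apply/orP; right; move: rb; rewrite Dq.
have homf := kHomExtendP (sub1v 1) (kHom1 1 1) rbb.
have Qq : map_poly (in_alg Qs) q \is a polyOver 1%VS by apply/polyOver1P; exists q.
have spl : splittingFieldFor <<1; aa>>%VS (map_poly (in_alg Qs) q) fullv.
  exists ss; last by rewrite -adjoin_cons.
  suff -> : map_poly (in_alg Qs) q = \prod_(z <- ss) ('X - z%:P) by exact: eqpxx.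
  apply: (map_inj_poly (fmorph_inj QsC)); first exact: rmorph0.
  rewrite QsC_rat -Dq Drs -Dss big_map rmorph_prod /=.
  by apply: eq_bigr => z _; rewrite map_polyXsubC.
have [g homg Dg] := kHom_extends (sub1v _) homf Qq spl.
pose gRM : {rmorphism Qs -> Qs} :=
  HB.pack (fun_of_lfun g)
    (GRing.isMonoidMorphism.Build _ _ g (kHom_monoid_morphism homg)).
have [nu Dnu] := extend_algC_subfield_aut QsC gRM.
exists nu; rewrite -Daa -Dnu /= -Dg ?memv_adjoin //.
by rewrite (kHomExtend_val (kHom1 1 1)).
Qed.

Lemma minCpoly_root_simple (a z : algC) :
  root (minCpoly a) z -> ~~ root (minCpoly a)^`() z.
Proof.
move=> /minCpoly_root_aut[nu <-]; have [q [Dq mon_q] dv_q] := minCpolyP a.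
have size_q : (1 < size q)%N by have := size_minCpoly a; rewrite Dq size_map_poly.
rewrite Dq deriv_map -(eq_map_poly (fmorph_rat nu)) map_poly_comp fmorph_root dv_q.
apply/negP => /(dvdp_leq (deriv_neq0 size_q)).
by rewrite leqNgt lt_size_deriv // monic_neq0.
Qed.

Lemma separable_minCpoly_comp_Xn (a : algC) (u : nat) :
  a != 0 -> (0 < u)%N -> separable_poly (minCpoly a \Po 'X^u).
Proof.
move=> a_neq0 u_gt0; apply: separable_poly_simple_roots => z.
rewrite deriv_comp derivXn rootM negb_or !rootE !horner_comp hornerXn -!rootE.
move=> /[dup] /minCpoly_root_simple -> /minCpoly_root_aut[nu Dzu] /=.
have z_neq0 : z != 0.
  by apply: contraNneq a_neq0 => z0; rewrite -(fmorph_eq0 nu) Dzu z0 expr0n gtn_eqF.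
by rewrite rootE hornerMn hornerXn mulrn_eq0 negb_or -lt0n u_gt0 expf_neq0.
Qed.

Section ConjugatesOfProgression.

Variables (lam mu : algC) (u : nat).
Hypotheses (lam_neq0 : lam != 0) (mu_prim : u.-primitive_root mu).

(* z^u = nu (lam^u) makes z / nu lam a power of the primitive root nu mu. *)
Lemma root_minCpoly_comp_Xn z : root (minCpoly (lam ^+ u) \Po 'X^u) z ->
  exists (nu : {rmorphism algC -> algC}) (k : nat), z = nu (lam * mu ^+ k).
Proof.
rewrite rootE horner_comp hornerXn -rootE => /minCpoly_root_aut[nu Dzu].
have nu_lam_neq0 : nu lam != 0 by rewrite fmorph_eq0.
have nu_mu_prim : u.-primitive_root (nu mu) by rewrite fmorph_primitive_root.
have /(prim_rootP nu_mu_prim)[k Dk] : (z / nu lam) ^+ u = 1.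
  by rewrite exprMn exprVn -rmorphXn Dzu divff // -Dzu fmorph_eq0 expf_neq0.
by exists nu, k; rewrite rmorphM rmorphXn -Dk mulrC divfK.
Qed.

Lemma dvdZpoly_comp_Xn_progression (r : {poly int}) :
    (forall k, root (map_poly intr r) (lam * mu ^+ k)) ->
  exists2 s : {poly int}, (1 < size s)%N & dvdZpoly (s \Po 'X^u) r.
Proof.
move=> root_r; have u_gt0 := prim_order_gt0 mu_prim.
have [q [Dq _] _] := minCpolyP (lam ^+ u).
have size_q : (1 < size q)%N.
  by have := size_minCpoly (lam ^+ u); rewrite Dq size_map_poly.
apply: (dvdZpoly_comp_Xn u_gt0 size_q).
rewrite -(dvdp_map (@ratr algC)) map_poly_rmorph_intr map_comp_poly map_polyXn -Dq.
apply: separable_dvdp_roots; first by rewrite separable_minCpoly_comp_Xn ?expf_neq0.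
move=> z /root_minCpoly_comp_Xn[nu [k ->]].
by rewrite -(map_poly_rmorph_intr nu) fmorph_root root_r.
Qed.

End ConjugatesOfProgression.

Lemma dvdZpoly_Phi_root (u : nat) (mu : algC) (r : {poly int}) :
  u.-primitive_root mu -> root (map_poly intr r) mu -> dvdZpoly 'Phi_u r.
Proof.
move=> mu_prim r_mu; apply: dvdZpoly_monic (Cyclotomic_monic u) _.
have [q [Dq _] dv_q] := minCpolyP mu.
suff -> : map_poly intr 'Phi_u = q by rewrite -dv_q map_poly_rmorph_intr.
apply: (map_inj_poly (fmorph_inj (@ratr algC))); first exact: rmorph0.
rewrite map_poly_rmorph_intr -Dq (minCpoly_cyclotomic mu_prim).
by rewrite (Cintr_Cyclotomic mu_prim).
Qed.

Local Open Scope fset_scope.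

Theorem proposition3p12 (r : {poly int}) (X : {fset algC}) :
  r.[0] != 0 ->
  (forall x : algC, x \in X <-> (x != 0 /\ root (map_poly intr r) x)) ->
  (~ arith_free X <->
   exists (u : nat) (s : {poly int}),
     [/\ (0 < u)%N, (1 < size s)%N,
         dvdZpoly ('Phi_u) r & dvdZpoly (s \Po 'X^u) r]).
Proof.
move=> r0_neq0 DX.
have root_X x : root (map_poly intr r) x -> x \in X.
  move=> r_x; apply/DX; split=> //; apply: contraTneq r_x => ->.
  by rewrite rootE horner_coef0 coef_map intr_eq0 -horner_coef0.
split=> [/NNPP[lam [mu [/DX[lam_neq0 _] /DX[mu_neq0 r_mu] prog]]] |].
  have [u mu_prim le_uX] := progression_primitive_root lam_neq0 mu_neq0 prog.
  have r_prog k : root (map_poly intr r) (lam * mu ^+ k).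
    rewrite -(prim_expr_mod mu_prim); apply: (proj2 (proj1 (DX _) (prog _ _))).
    exact: ltnW (leq_trans (ltn_pmod _ (prim_order_gt0 mu_prim)) le_uX).
  have [s size_s dvd_s] := dvdZpoly_comp_Xn_progression lam_neq0 mu_prim r_prog.
  exists u, s; split=> //; first exact: prim_order_gt0 mu_prim.
  exact: dvdZpoly_Phi_root mu_prim r_mu.
move=> [u [s [u_gt0 size_s [c1 Dr1] [c2 Dr2]]]]; apply.
have [z z_prim] := C_prim_root_exists u_gt0.
have /closed_rootP[a s_a] : size (map_poly (intr : int -> algC) s) != 1%N.
  by rewrite size_map_inj_poly ?gtn_eqF //; apply: intr_inj.
have r_prog k : root (map_poly intr r) (u.-root a * z ^+ k).
  rewrite Dr2 rmorphM /= rootM map_comp_poly map_polyXn; apply/orP; right.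
  apply: root_comp_Xn_mul_unity; last by rewrite exprAC (prim_expr_order z_prim) expr1n.
  by rewrite rootE horner_comp hornerXn rootCK.
exists (u.-root a), z; split=> [||k _]; apply: root_X => //.
  by rewrite -[u.-root a]mulr1 -(expr0 z).
by rewrite Dr1 rmorphM /= rootM (Cintr_Cyclotomic z_prim) root_cyclotomic // z_prim orbT.
Qed.
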